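(* Let $\mathcal A=(Q,\Sigma,\delta,\rho)$ be a connected bireversible Mealy automaton whose labeled orbit tree $\mathfrak t(\mathcal A)$ has no active self-liftable branch, and let $\mathfrak j$ be a jungle tree with trunk of length $n$. Then for every $i\in\{1,\dots,n\}$, every $\sim$-class $\gamma$ of stems and every $\mathbf u\in Q^{i-1}$ which is a prefix of some stem in $\gamma$, the set $\{q\in Q : \mathbf uq \text{ is a prefix of some stem in } \gamma\}$ has at least $2$ elements; that is, $\mathcal S_{\mathrm{eq}}(i)\ge 2$.
   Context: Mealy automata. A Mealy automaton is $\mathcal A=(Q,\Sigma,\delta,\rho)$ with $Q,\Sigma$ finite non-empty sets, $\delta=(\delta_i\colon Q\to Q)_{i\in\Sigma}$, $\rho=(\rho_x\colon\Sigma\to\Sigma)_{x\in Q}$; transitions $x\xrightarrow{i\mid\rho_x(i)}\delta_i(x)$. Invertible: each $\rho_x$ a permutation of $\Sigma$; reversible: each $\delta_i$ a permutation of $Q$; bireversible: invertible, reversible, and for each $j\in\Sigma$ the map $x\mapsto\delta_{\rho_x^{-1}(j)}(x)$ is a permutation of $Q$. Connected: the directed graph on $Q$ with edges $x\to\delta_i(x)$ is connected. Extensions: $\rho_x(i\mathbf s)=\rho_x(i)\rho_{\delta_i(x)}(\mathbf s)$; $\rho_{x_1\cdots x_m}=\rho_{x_m}\circ\cdots\circ\rho_{x_1}$; $\delta_i(x\mathbf u)=\delta_i(x)\delta_{\rho_x(i)}(\mathbf u)$ on $Q^*$, $\delta_{i_1\cdots i_m}=\delta_{i_m}\circ\cdots\circ\delta_{i_1}$.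 The connected components of $\mathcal A^n$ (stateset $Q^n$, transitions $\mathbf u\xrightarrow{i\mid\rho_{\mathbf u}(i)}\delta_i(\mathbf u)$) are, for reversible $\mathcal A$, the orbits of $Q^n$ under the maps $\delta_{\mathbf s}$. Orbit tree $\mathfrak t(\mathcal A)$: vertices at level $n\ge0$ are the connected components of $\mathcal A^n$; an edge from the component of $\mathbf u\in Q^n$ to that of $\mathbf ux$ for all $\mathbf u,x$; edge $C\to D$ labeled $\#D/\#C$. $\top,\bot$ = first/last vertex of a downward path; level of an edge/path = level of its top vertex. A word of $Q^*\cup Q^\omega$ represents the initial path through the components of its prefixes. Edge $e$ is liftable to $f$ if every word of $\bot(e)$ has a suffix in $\bot(f)$; paths are liftable if corresponding edges are. $f$ is a legitimate child of $e$ if $\top(f)=\bot(e)$ and $f$ is liftable to $e$. A path/subtree $\mathfrak s$ is $k$-self-liftable if for all $i\ge0$ every path in $\mathfrak s$ starting at level $i+k$ is liftable to a path in $\mathfrak s$ starting at level $i$; self-liftable if $k$-self-liftable for some $k>0$. A branch (infinite initial path) is active if its labels are not eventually all $1$. Jungle trees: for a finite 1-self-liftable initial path $\mathbf e$ of length $n$ whose last edge has at least two legitimate children, all labeled $1$, $\mathfrak j(\mathbf e)$ consists of $\mathbf e$ plus all edges descending from $\bot(\mathbf e)$ that are liftable to the last edge of $\mathbf e$. Stems: the words of $\bot(\mathbf e)\subseteq Q^n$. A $\mathfrak j$-word is a word representing an initial path of $\mathfrak j$. For stems $\mathbf u,\mathbf v$: $\mathbf u\sim\mathbf v$ iff there is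 $\mathbf s\in Q^*$ such that $\mathbf{usv}$ is a $\mathfrak j$-word and $\rho_{\mathbf{us}}$ is the identity of $\Sigma^*$; $\sim$ is an equivalence relation. $\mathcal S_{\mathrm{eq}}(i)$ denotes the cardinality of $\{q\in Q:\mathbf uq$ is a prefix of a stem in $\gamma\}$ for $\mathbf u\in Q^{i-1}$ a prefix of a stem in a $\sim$-class $\gamma$; this number does not depend on the choice of $\mathbf u$ and $\gamma$. *)

From mathcomp Require Import all_boot all_order all_algebra.
Set Implicit Arguments. Unset Strict Implicit. Unset Printing Implicit Defensive.

Section Mealy.
Variables (Q S : finType) (delta : S -> Q -> Q) (rho : Q -> S -> S).

Fixpoint rhoW (x : Q) (s : seq S) : seq S :=
  if s is i :: s' then rho x i :: rhoW (delta i x) s' else [::].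

Definition rhoQ (u : seq Q) (s : seq S) : seq S :=
  foldl (fun t x => rhoW x t) s u.

Fixpoint deltaQ (i : S) (u : seq Q) : seq Q :=
  if u is x :: u' then delta i x :: deltaQ (rho x i) u' else [::].

Definition deltaS (s : seq S) (u : seq Q) : seq Q :=
  foldl (fun v i => deltaQ i v) u s.

Definition invertible : Prop := forall x : Q, injective (rho x).
Definition reversible : Prop := forall i : S, injective (delta i).
Definition bireversible : Prop :=
  reversible /\
  exists inv : (forall x : Q, injective (rho x)),
    forall j : S, injective (fun x : Q => delta (invF (inv x) j) x).

Definition autEdge : rel Q :=
  fun x y => [exists i, delta i x == y] || [exists i, delta i y == x].
Definition connected_aut : Prop := forall x y : Q, connect autEdge x y.

Definition powEdge (n : nat) : rel (n.-tuple Q) :=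
  fun u v => [exists i, deltaQ i u == v :> seq Q]
          || [exists i, deltaQ i v == u :> seq Q].

Definition sameComp (u v : seq Q) : bool :=
  (size v == size u) &&
  connect (@powEdge (size u)) (in_tuple u) (insubd (in_tuple u) v).

Definition compCard (u : seq Q) : nat :=
  #|[set v : (size u).-tuple Q | connect (@powEdge (size u)) (in_tuple u) v]|.

(* A vertex at level n is the component of a word of length n.
   An edge at level m (from level m to level m+1) is represented by any word
   w of length m+1 of its bottom vertex: it goes from the component of
   take m w to the component of w. *)
Definition label (w : seq Q) : rat :=
  ((compCard w)%:R / (compCard (take (size w).-1 w))%:R)%R.

(* edge (with bottom word) we is liftable to edge (with bottom word) wf:
   every word of bot(e) has a suffix in bot(f) *)
Definition liftE (we wf : seq Q) : Prop :=
  forall v, sameComp v we -> sameComp (drop (size v - size wf) v) wf.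

(* a branch: an infinite initial path, given by its vertices:
   b n is a word of length n representing the vertex at level n *)
Definition isBranch (b : nat -> seq Q) : Prop :=
  forall n, size (b n) = n /\ sameComp (take n (b n.+1)) (b n).

(* the edge of the branch at level m has bottom word b m.+1 *)
Definition activeBranch (b : nat -> seq Q) : Prop :=
  ~ (exists N, forall m, N <= m -> label (b m.+1) = 1%R).

(* k-self-liftable branch: every path in b starting at level i+k is liftable
   to the path in b starting at level i (of the same length), edgewise *)
Definition kSelfLiftableBranch (k : nat) (b : nat -> seq Q) : Prop :=
  forall i j, liftE (b (i + k + j).+1) (b (i + j).+1).

Definition selfLiftableBranch (b : nat -> seq Q) : Prop :=
  exists2 k, 0 < k & kSelfLiftableBranch k b.

Definition noActiveSelfLiftableBranch : Prop :=
  forall b, isBranch b -> selfLiftableBranch b -> ~ activeBranch b.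

(* Finite initial path e of length n = size w, represented by a word w of its
   bottom vertex; its edge at level m < n has bottom word take m.+1 w. *)
Definition oneSelfLiftableInit (w : seq Q) : Prop :=
  forall i j, i + 1 + j < size w ->
    liftE (take (i + 1 + j).+1 w) (take (i + j).+1 w).

(* f (bottom word v) is a legitimate child of the last edge of e (bottom
   word w): top(f) = bot(e) and f is liftable to that last edge *)
Definition legitChild (w v : seq Q) : Prop :=
  size v = (size w).+1 /\ sameComp (take (size w) v) w /\ liftE v w.

Definition jungleTrunk (w : seq Q) : Prop :=
  0 < size w /\ oneSelfLiftableInit w /\
  (exists v1 v2, legitChild w v1 /\ legitChild w v2 /\ ~ sameComp v1 v2) /\
  (forall v, legitChild w v -> label v = 1%R).

Definition inJungle (w e : seq Q) : Prop :=
  (size e <= size w /\ sameComp e (take (size e) w)) \/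
  (size w < size e /\ sameComp (take (size w) e) w /\ liftE e w).

Definition jWord (w z : seq Q) : Prop :=
  forall l, l < size z -> inJungle w (take l.+1 z).

Definition stem (w v : seq Q) : Prop := sameComp v w.

Definition simStem (w u v : seq Q) : Prop :=
  exists s : seq Q, jWord w (u ++ s ++ v) /\
    forall t : seq S, rhoQ (u ++ s) t = t.

Definition isSimClass (w : seq Q) (gamma : seq Q -> Prop) : Prop :=
  (exists g, gamma g) /\
  forall g, gamma g -> forall v, gamma v <-> (stem w v /\ simStem w g v).

End Mealy.

(* The components of [A^m] are the orbits of the maps [deltaQ i] and their
   inverses; they are therefore compatible with taking suffixes and, by
   reversibility, a one-letter extension of one word of a component is matched
   by a one-letter extension of any other word of it.  Hence a j-word [p] of
   length at least [n] ends in a stem, and each of the two legitimate children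
   of the last trunk edge, which lie in different components, yields a letter
   [q] making [rcons p q] a j-word; the two letters differ.  If [v] is a stem
   in [gamma], [s] witnesses [v ~ v] and [u] is a prefix of [v], then
   [v ++ s ++ u] is a j-word; extending it by either letter and then up to
   length [size (v ++ s) + n] gives a stem [rcons u q ++ e], equivalent to [v]
   through the same [s]. *)
From mathcomp Require Import all_boot all_order all_algebra.
From mathcomp Require Import zify.
From Stdlib Require Import Relation_Operators Operators_Properties.
Set Implicit Arguments. Unset Strict Implicit. Unset Printing Implicit Defensive.

Section Components.
Variables (Q S : finType) (delta : S -> Q -> Q) (rho : Q -> S -> S).
Local Notation deltaQ := (deltaQ delta rho).
Local Notation sameComp := (sameComp delta rho).

Lemma size_deltaQ i u : size (deltaQ i u) = size u.
Proof. by elim: u i => //= x u IH i; rewrite IH. Qed.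

Lemma drop_deltaQ k i u : exists j, drop k (deltaQ i u) = deltaQ j (drop k u).
Proof.
elim: u i k => [|x u IH] i [|k] /=; try by exists i.
exact: IH.
Qed.

Lemma deltaQ_rcons i u :
  exists j, forall x, deltaQ i (rcons u x) = rcons (deltaQ i u) (delta j x).
Proof.
elim: u i => [|y u IH] i /=; first by exists i.
by have [j hj] := IH (rho y i); exists j => x; rewrite hj.
Qed.

Definition deltaStep (a b : seq Q) : Prop := exists i, deltaQ i a = b.

Definition sameOrbit : seq Q -> seq Q -> Prop := clos_refl_sym_trans _ deltaStep.

Lemma size_sameOrbit a b : sameOrbit a b -> size b = size a.
Proof. by elim=> [x y [i <-]|||x y z _ -> _ ->] //; rewrite size_deltaQ. Qed.

Lemma sameOrbit_map (f : seq Q -> seq Q) :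
    (forall a b, deltaStep a b -> deltaStep (f a) (f b)) ->
  forall a b, sameOrbit a b -> sameOrbit (f a) (f b).
Proof.
move=> fstep a b; elim=> [x y /fstep|x|x y _|x y z _ hxy _ hyz].
- exact: rst_step.
- exact: rst_refl.
- exact: rst_sym.
- exact: rst_trans hxy hyz.
Qed.

Lemma sameOrbit_drop k a b : sameOrbit a b -> sameOrbit (drop k a) (drop k b).
Proof.
by apply: sameOrbit_map => {}a {}b [i <-]; have [j ->] := drop_deltaQ k i a; exists j.
Qed.

Lemma sameOrbit_rcons : reversible delta ->
  forall a b x, sameOrbit a b -> exists y, sameOrbit (rcons a x) (rcons b y).
Proof.
move=> hrev a b x /clos_rst_rst1n_iff hab; elim: hab x => {a b}.
  by move=> a x; exists x; apply: rst_refl.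
move=> a b c [[i <-]|[i hb]] _ IH x.
  have [j hj] := deltaQ_rcons i a; have [y hy] := IH (delta j x).
  by exists y; apply: rst_trans hy; apply: rst_step; exists i.
have [j hj] := deltaQ_rcons i b; have [y hy] := IH (invF (hrev j) x).
exists y; apply: rst_trans hy; apply: rst_sym; apply: rst_step.
by exists i; rewrite hj hb f_invF.
Qed.

Lemma sameOrbit_connect n (ta tb : n.-tuple Q) :
  sameOrbit ta tb -> connect (@powEdge _ _ delta rho n) ta tb.
Proof.
suff : forall a b, clos_refl_sym_trans_1n _ deltaStep a b ->
    forall x y : n.-tuple Q, val x = a -> val y = b -> connect (@powEdge _ _ delta rho n) x y.
  by move=> gen /clos_rst_rst1n_iff /gen; apply.
move=> {ta tb} a b; elim=> {a b} [a|a b c hab _ IH] x y ea eb.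
  by have -> : x = y by apply: val_inj; rewrite ea eb.
have sb : size b == n.
  case: hab => -[i e]; first by rewrite -e size_deltaQ -ea size_tuple.
  by rewrite -(size_deltaQ i) e -ea size_tuple.
have eb' : val (insubd x b) = b by rewrite val_insubd sb.
apply: connect_trans (IH _ y eb' eb); apply: connect1.
by case: hab => -[i e]; apply/orP; [left|right]; apply/existsP; exists i;
   rewrite ea eb' e.
Qed.

Lemma connect_sameOrbit n (ta tb : n.-tuple Q) :
  connect (@powEdge _ _ delta rho n) ta tb -> sameOrbit ta tb.
Proof.
case/connectP=> p hp ->{tb}; elim: p ta hp => [|tb p IH] ta /=.
  by move=> _; apply: rst_refl.
case/andP=> /orP e /IH; apply: rst_trans.
by case: e => /existsP [i /eqP e]; [apply: rst_step|apply: rst_sym; apply: rst_step];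
   exists i.
Qed.

Lemma sameCompP a b : sameComp a b <-> sameOrbit a b.
Proof.
rewrite /sameComp; split.
  case/andP=> /eqP sb /connect_sameOrbit.
  by rewrite val_insubd /= sb eqxx.
move=> hab; have sb := size_sameOrbit hab; rewrite sb eqxx /=.
by apply: sameOrbit_connect; rewrite val_insubd sb eqxx.
Qed.

Lemma sameComp_refl a : sameComp a a.
Proof. by apply/sameCompP; apply: rst_refl. Qed.

Lemma sameComp_sym a b : sameComp a b -> sameComp b a.
Proof. by move/sameCompP=> hab; apply/sameCompP; apply: rst_sym. Qed.

Lemma sameComp_trans a b c : sameComp a b -> sameComp b c -> sameComp a c.
Proof.
by move=> /sameCompP hab /sameCompP hbc; apply/sameCompP; apply: rst_trans hab hbc.
Qed.

Lemma size_sameComp a b : sameComp a b -> size b = size a.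
Proof. by move/sameCompP/size_sameOrbit. Qed.

Lemma sameComp_drop k a b : sameComp a b -> sameComp (drop k a) (drop k b).
Proof. by move/sameCompP/(sameOrbit_drop k)/sameCompP. Qed.

Lemma sameComp_rcons : reversible delta ->
  forall a b x, sameComp a b -> exists y, sameComp (rcons a x) (rcons b y).
Proof.
move=> hrev a b x /sameCompP /(sameOrbit_rcons hrev x) [y hy].
by exists y; apply/sameCompP.
Qed.

End Components.

Section Jungle.
Variables (Q S : finType) (delta : S -> Q -> Q) (rho : Q -> S -> S).
Local Notation sameComp := (sameComp delta rho).
Local Notation liftE := (liftE delta rho).
Local Notation inJungle := (inJungle delta rho).
Local Notation jWord := (jWord delta rho).
Local Notation legitChild := (legitChild delta rho).

Lemma liftE_suffix z v : sameComp (drop (size z - size v) z) v -> liftE z v.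
Proof.
move=> hz y hy; rewrite -(size_sameComp hy).
exact: sameComp_trans (sameComp_drop _ hy) hz.
Qed.

Lemma liftE_trans a b c : size c <= size b -> liftE a b -> liftE b c -> liftE a c.
Proof.
move=> hcb hab hbc y hy.
have hba : size b <= size a.
  by have := size_sameComp (hab a (sameComp_refl _ _ _)); rewrite size_drop; lia.
rewrite -(size_sameComp hy).
have := hbc _ (hab y hy); rewrite drop_drop size_drop -(size_sameComp hy).
by have -> : size a - (size a - size b) - size c + (size a - size b) = size a - size c
  by lia.
Qed.

Lemma jWord_last w p : jWord w p -> 0 < size p -> inJungle w p.
Proof. by move=> hp p0; have := hp (size p).-1; rewrite prednK // take_size; apply. Qed.

Lemma jWord_catl w a b : jWord w (a ++ b) -> jWord w a.
Proof. by move=> h l hl; have := h l; rewrite size_cat takel_cat //; apply; lia. Qed.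

Lemma jWord_rcons w p q : jWord w p -> inJungle w (rcons p q) -> jWord w (rcons p q).
Proof.
move=> hp hj l; rewrite size_rcons ltnS leq_eqVlt => /orP [/eqP ->|hl].
  by rewrite take_oversize // size_rcons.
by rewrite -cats1 takel_cat //; apply: hp.
Qed.

Lemma jWord_prefix_stem w p : 0 < size w -> size w <= size p -> jWord w p ->
  sameComp (take (size w) p) w.
Proof.
move=> w0 hwp hp; have := hp (size w).-1; rewrite prednK // => /(_ hwp).
case=> [[_]|[]]; last by rewrite size_takel // ltnn.
by rewrite size_takel // take_size.
Qed.

Lemma jWord_suffix_stem w p : 0 < size w -> size w <= size p -> jWord w p ->
  sameComp (drop (size p - size w) p) w.
Proof.
move=> w0 hwp /jWord_last /(_ (leq_trans w0 hwp)) [[hpw]|[_ [_ /(_ p)]]].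
  have e : size p = size w by lia.
  by move: hpw; rewrite e subnn drop0 take_size.
by apply; apply: sameComp_refl.
Qed.

Lemma jWord_extend_by_child w p v : reversible delta ->
    0 < size w -> size w <= size p -> jWord w p -> legitChild w v ->
  exists q, sameComp (rcons (drop (size p - size w) p) q) v /\ jWord w (rcons p q).
Proof.
move=> hrev w0 hwp hp [sv [htop hlift]].
case/lastP: v sv htop hlift => [//|v' c]; rewrite size_rcons => -[sv'] htop hlift.
have {}htop : sameComp v' w.
  by move: htop; rewrite -cats1 takel_cat ?sv' // -sv' take_size.
have hv' : sameComp v' (drop (size p - size w) p).
  exact: sameComp_trans htop (sameComp_sym (jWord_suffix_stem w0 hwp hp)).
have [q hq] := sameComp_rcons hrev c hv'.
exists q; split; first exact: sameComp_sym.
apply: jWord_rcons => //; right; split; first by rewrite size_rcons; lia.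
split; first by rewrite -cats1 takel_cat // (jWord_prefix_stem w0 hwp hp).
apply: (liftE_trans _ _ hlift); first by rewrite size_rcons sv'.
apply: liftE_suffix.
rewrite !size_rcons sv' subSS drop_rcons ?leq_subr //.
exact: sameComp_sym.
Qed.

Lemma jWord_two_extensions w p : reversible delta -> jungleTrunk delta rho w ->
    size w <= size p -> jWord w p ->
  exists q1 q2, q1 <> q2 /\ jWord w (rcons p q1) /\ jWord w (rcons p q2).
Proof.
move=> hrev [w0 [_ [[v1 [v2 [h1 [h2 hne]]]] _]]] hwp hp.
have [q1 [c1 j1]] := jWord_extend_by_child hrev w0 hwp hp h1.
have [q2 [c2 j2]] := jWord_extend_by_child hrev w0 hwp hp h2.
exists q1, q2; split=> // e; apply: hne; rewrite e in c1.
exact: sameComp_trans (sameComp_sym c1) c2.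
Qed.

Lemma jWord_extend w : reversible delta -> jungleTrunk delta rho w ->
  forall k p, size w <= size p -> jWord w p -> exists e, size e = k /\ jWord w (p ++ e).
Proof.
move=> hrev hj; elim=> [|k IH] p hwp hp; first by exists [::]; rewrite cats0.
have [q [_ [_ [hq _]]]] := jWord_two_extensions hrev hj hwp hp.
have [|e [<- he]] := IH (rcons p q) _ hq; first by rewrite size_rcons; lia.
by exists (q :: e); rewrite -cat_rcons.
Qed.

End Jungle.

Theorem corollary5p16 (Q S : finType) (delta : S -> Q -> Q) (rho : Q -> S -> S)
  (hQ : 0 < #|Q|) (hS : 0 < #|S|)
  (hconn : connected_aut delta)
  (hbirev : bireversible delta rho)
  (hnoact : noActiveSelfLiftableBranch delta rho)
  (n : nat) (w : seq Q) (hn : size w = n)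
  (hj : jungleTrunk delta rho w) :
  forall i : nat, 1 <= i <= n ->
  forall gamma : seq Q -> Prop, isSimClass delta rho w gamma ->
  forall u : seq Q, size u = i.-1 -> (exists v, gamma v /\ prefix u v) ->
  exists q1 q2 : Q, q1 <> q2 /\
    (exists v, gamma v /\ prefix (rcons u q1) v) /\
    (exists v, gamma v /\ prefix (rcons u q2) v).
Proof.
have hrev : reversible delta := hbirev.1.
have w0 : 0 < size w by case: hj.
move=> i /andP [i1 iN] gamma [_ hclass] u hu [v [hv /prefixP [t ev]]].
have [/size_sameComp sv [s [hvs hid]]] := (hclass v hv v).1 hv.
have hxu : jWord delta rho w ((v ++ s) ++ u).
  by apply: (@jWord_catl _ _ _ _ _ _ t); rewrite -!catA -ev.
have [|q1 [q2 [hne [j1 j2]]]] := jWord_two_extensions hrev hj _ hxu.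
  by rewrite !size_cat; lia.
suff in_gamma : forall q, jWord delta rho w (rcons ((v ++ s) ++ u) q) ->
    exists v', gamma v' /\ prefix (rcons u q) v'.
  by exists q1, q2; split=> //; split; apply: in_gamma.
move=> q jq; have [|e [he je]] := jWord_extend hrev hj (n - i) _ jq.
  by rewrite size_rcons !size_cat; lia.
exists (rcons u q ++ e); split; last exact: prefix_prefix.
have ez : rcons ((v ++ s) ++ u) q ++ e = (v ++ s) ++ (rcons u q ++ e).
  by rewrite -!cats1 -!catA.
have sz : size (rcons u q ++ e) = size w by rewrite size_cat size_rcons he hu; lia.
rewrite ez in je; apply/(hclass v hv); split.
  have := jWord_suffix_stem w0 _ je; rewrite size_cat sz addnK drop_size_cat //.
  by apply; rewrite leq_addl.
by exists s; split=> //; rewrite catA.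
Qed.
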